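(* Let $n\in\mathbb{N}$ and let $g$ be a nonzero real number. Let $\mathcal{C}=\{q\in\mathbb{R}^n \mid q_1>\dots>q_n\}$ and, for $q\in\mathcal{C}$, $p\in\mathbb{R}^n$, define the $n\times n$ matrices $$Q_{jk}=q_j\delta_{jk},\qquad L_{jk}=p_j\delta_{jk}+\mathrm{i} g\,\frac{1-\delta_{jk}}{q_j-q_k},\qquad j,k=1,\dots,n.$$ Let $A(z)=\det(z\mathbf{1}_n-L)$ and $D(z)=\operatorname{tr}\big(Q\operatorname{adj}(z\mathbf{1}_n-L)\big)$, where $\operatorname{adj}$ denotes the adjugate matrix. Let $\lambda_1>\dots>\lambda_n$ be the eigenvalues of the Hermitian matrix $L$, and let $\phi_1,\dots,\phi_n$ be the angle variables of the rational Calogero--Moser system, i.e. $\phi_k=(UQU^\dagger)_{kk}$ for a unitary matrix $U$ with $ULU^\dagger=\operatorname{diag}(\lambda_1,\dots,\lambda_n)$ (for the Calogero--Moser point $(q,p)$ such $U$ can be chosen so that $UQU^\dagger$ has entries $\phi_j\delta_{jk}-\mathrm{i} g\frac{1-\delta_{jk}}{\lambda_j-\lambda_k}$). Then for every $(q,p)\in\mathcal{C}\times\mathbb{R}^n$ and every $k=1,\dots,n$, $$\mu_k:=\frac{D(\lambda_k)}{A'(\lambda_k)}=\phi_k .$$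
   Context: This concerns the rational Calogero--Moser system with Hamiltonian $H=\frac12\sum_j p_j^2+g^2\sum_{j<k}(q_j-q_k)^{-2}$ on the phase space $T^*\mathcal{C}=\{(q,p)\mid q\in\mathcal{C},p\in\mathbb{R}^n\}$ with symplectic form $\sum_j dq_j\wedge dp_j$. The system arises by Hamiltonian reduction of pairs of Hermitian matrices $(X,P)$ with symplectic form $\operatorname{tr}(dX\wedge dP)$ under the conjugation action of $U(n)$ at the moment map value $[X,P]=\mathrm{i} g(vv^\dagger-\mathbf{1}_n)$, $v=(1,\dots,1)^\dagger$; gauge-fixing $X$ diagonal gives $(Q,L)$ above, while gauge-fixing $P$ diagonal gives the pair $\tilde L=\operatorname{diag}(\lambda)$, $\tilde Q_{jk}=\phi_j\delta_{jk}-\mathrm{i} g\frac{1-\delta_{jk}}{\lambda_j-\lambda_k}$, and $(q,p)\mapsto(\phi,\lambda)$ is a canonical transformation (action-angle variables) with $\sum_j d\phi_j\wedge d\lambda_j$ the transformed symplectic form. *)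

From HB Require Import structures.
From mathcomp Require Import all_boot all_order all_algebra.
From mathcomp Require Import complex.
Set Implicit Arguments. Unset Strict Implicit. Unset Printing Implicit Defensive.
Import Order.TTheory GRing.Theory Num.Theory.
Local Open Scope ring_scope.
Local Open Scope complex_scope.

Section CM.
Variable R : rcfType.
Variable n : nat.

Definition strictly_decreasing (x : 'I_n -> R) : Prop :=
  forall j k : 'I_n, (j < k)%N -> x k < x j.

Definition adjoint (M : 'M[R[i]]_n) : 'M[R[i]]_n := (map_mx (fun z => z^*) M)^T.

Definition unitary (U : 'M[R[i]]_n) : Prop := U *m adjoint U = 1%:M.

Definition CM_Q (q : 'I_n -> R) : 'M[R[i]]_n := diag_mx (\row_j (q j)%:C).

Definition CM_L (g : R) (q p : 'I_n -> R) : 'M[R[i]]_n :=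
  \matrix_(j, k) (if j == k then (p j)%:C
                  else 'i * g%:C / (q j - q k)%:C).

Definition CM_A (g : R) (q p : 'I_n -> R) : {poly R[i]} := char_poly (CM_L g q p).

Definition CM_D (g : R) (q p : 'I_n -> R) (z : R[i]) : R[i] :=
  \tr (CM_Q q *m \adj (z%:M - CM_L g q p)).

End CM.

From HB Require Import structures.
From mathcomp Require Import all_boot all_order all_algebra.
From mathcomp Require Import complex.
Set Implicit Arguments.
Unset Strict Implicit.
Unset Printing Implicit Defensive.

Import Order.TTheory GRing.Theory Num.Theory.
Local Open Scope ring_scope.

(* If U L U^-1 = diag(lambda), then adj (z - L) = U^-1 adj (z - diag(lambda)) U
   and adj (z - diag(lambda)) = diag (prod_(j != i) (z - lambda_j)).  At
   z = lambda_k only the k-th diagonal entry survives; it equals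
   A'(lambda_k) = prod_(j != k) (lambda_k - lambda_j), which is nonzero as the
   eigenvalues are distinct.  Hence tr (Q adj (lambda_k - L)) = A'(lambda_k)
   (U Q U^-1)_kk.  The conjugation formula for the adjugate is proved over
   polynomials in z, where z - diag(lambda) is invertible, and then evaluated. *)

Section Adjugate.
Variable R : idomainType.

Lemma adj_unique n (B X : 'M[R]_n) :
  \det B != 0 -> B *m X = (\det B)%:M -> \adj B = X.
Proof.
move=> detB_neq0 BX.
have : \adj B *m B *m (X - \adj B) = 0.
  by rewrite -mulmxA mulmxBr BX mul_mx_adj subrr mulmx0.
rewrite mul_adj_mx mul_scalar_mx => /eqP; rewrite scalemx_eq0 (negbTE detB_neq0).
by rewrite subr_eq0 => /eqP.
Qed.

Lemma adj_diag n (d : 'I_n -> R) : \prod_i d i != 0 ->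
  \adj (diag_mx (\row_i d i)) = diag_mx (\row_i \prod_(j | j != i) d j).
Proof.
move=> prod_neq0; have det_d : \det (diag_mx (\row_i d i)) = \prod_i d i.
  by rewrite det_diag; apply: eq_bigr => i _; rewrite mxE.
apply: adj_unique; rewrite det_d // mulmx_diag -diag_const_mx.
by congr diag_mx; apply/rowP => i; rewrite !mxE [RHS](bigD1 i).
Qed.

Lemma adj_conjugate n (U V B : 'M[R]_n) :
  V *m U = 1%:M -> \det B != 0 -> \adj (V *m B *m U) = V *m \adj B *m U.
Proof.
move=> VU detB_neq0; have UV := mulmx1C VU.
have det_VBU : \det (V *m B *m U) = \det B.
  by rewrite !det_mulmx mulrAC -det_mulmx VU det1 mul1r.
apply: adj_unique; rewrite det_VBU //.
rewrite -!mulmxA (mulmxA U) UV mul1mx (mulmxA B) mul_mx_adj mul_scalar_mx.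
by rewrite -scalemxAr VU scalemx1.
Qed.

End Adjugate.

Section CharPolyMx.
Variable R : comNzRingType.

Lemma char_poly_mx_conjugate n (U V A : 'M[R]_n) : V *m U = 1%:M ->
  char_poly_mx (V *m A *m U)
  = map_mx polyC V *m char_poly_mx A *m map_mx polyC U.
Proof.
move=> VU; rewrite /char_poly_mx !map_mxM mulmxBr mulmxBl; congr (_ - _).
by rewrite scalar_mxC -mulmxA -map_mxM VU map_mx1 mulmx1.
Qed.

Lemma char_poly_mx_diag n (c : 'I_n -> R) :
  char_poly_mx (diag_mx (\row_i c i)) = diag_mx (\row_i ('X - (c i)%:P)).
Proof.
apply/matrixP => i j; rewrite !mxE.
by case: (i == j); rewrite ?mulr1n ?mulr0n ?subr0.
Qed.

Lemma horner_char_poly_mx n (A : 'M[R]_n) z :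
  map_mx (horner_eval z) (char_poly_mx A) = z%:M - A.
Proof.
apply/matrixP => i j; rewrite !mxE /horner_eval.
by case: (i == j); rewrite ?mulr1n ?mulr0n !hornerE.
Qed.

End CharPolyMx.

Lemma deriv_prod_XsubC_at (R : comNzRingType) (I : finType) (c : I -> R) k :
  (\prod_i ('X - (c i)%:P))^`().[c k] = \prod_(j | j != k) (c k - c j).
Proof.
rewrite (bigD1 k) //= derivM derivXsubC mul1r hornerD hornerM hornerXsubC.
rewrite subrr mul0r addr0 horner_prod.
by apply: eq_bigr => j _; rewrite hornerXsubC.
Qed.

Section Diagonalizable.
Variables (F : fieldType) (n : nat) (L U V : 'M[F]_n) (c : 'I_n -> F).
Hypotheses (UV : U *m V = 1%:M) (ULV : U *m L *m V = diag_mx (\row_i c i)).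

Let VU : V *m U = 1%:M := mulmx1C UV.

Lemma diagonalizableE : L = V *m diag_mx (\row_i c i) *m U.
Proof. by rewrite -ULV !mulmxA VU mul1mx -mulmxA VU mulmx1. Qed.

Lemma char_poly_mx_diagonalizable :
  char_poly_mx L
  = map_mx polyC V *m diag_mx (\row_i ('X - (c i)%:P)) *m map_mx polyC U.
Proof.
by rewrite {1}diagonalizableE char_poly_mx_conjugate // char_poly_mx_diag.
Qed.

Lemma char_poly_diagonalizable : char_poly L = \prod_i ('X - (c i)%:P).
Proof.
rewrite /char_poly char_poly_mx_diagonalizable !det_mulmx mulrAC -det_mulmx.
rewrite -map_mxM VU map_mx1 det1 mul1r det_diag.
by apply: eq_bigr => i _; rewrite mxE.
Qed.

Lemma adj_sub_diagonalizable z :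
  \adj (z%:M - L) = V *m diag_mx (\row_i \prod_(j | j != i) (z - c j)) *m U.
Proof.
have prod_neq0 : \prod_i ('X - (c i)%:P) != 0.
  exact/monic_neq0/monic_prod_XsubC.
have det_neq0 : \det (diag_mx (\row_i ('X - (c i)%:P))) != 0.
  by rewrite det_diag (eq_bigr (fun i => 'X - (c i)%:P)) // => i _; rewrite mxE.
have VU_poly : map_mx polyC V *m map_mx polyC U = 1%:M :> 'M[{poly F}]_n.
  by rewrite -map_mxM VU map_mx1.
have hornerC_mx (M : 'M[F]_n) : map_mx (horner_eval z) (map_mx polyC M) = M.
  by apply/matrixP => i j; rewrite !mxE /horner_eval hornerC.
rewrite -(horner_char_poly_mx L z) -map_mx_adj char_poly_mx_diagonalizable.
rewrite adj_conjugate // adj_diag // !map_mxM !hornerC_mx.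
congr (_ *m _ *m _); apply/matrixP => i j; rewrite !mxE.
case: (i == j); rewrite ?mulr1n ?mulr0n ?rmorph0 // rmorph_prod.
by apply: eq_bigr => l _; rewrite rmorphB /= !horner_evalE hornerX hornerC.
Qed.

Lemma mxtrace_adj_sub_diagonalizable (Q : 'M[F]_n) k : injective c ->
  \tr (Q *m \adj ((c k)%:M - L)) / (char_poly L)^`().[c k] = (U *m Q *m V) k k.
Proof.
move=> c_inj; set d := \prod_(j | j != k) (c k - c j).
have d_neq0 : d != 0.
  apply/prodf_neq0 => j jk; rewrite subr_eq0.
  by apply: contra jk => /eqP/c_inj ->.
have d_off i : i != k -> \prod_(j | j != i) (c k - c j) = 0.
  by move=> ik; rewrite (bigD1 k) 1?eq_sym //= subrr mul0r.
rewrite char_poly_diagonalizable deriv_prod_XsubC_at -/d adj_sub_diagonalizable.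
rewrite !mulmxA mxtrace_mulC !mulmxA mul_mx_diag /mxtrace (bigD1 k) //=.
rewrite big1 ?addr0 => [|i ik]; last by rewrite !mxE d_off // mulr0.
by rewrite !mxE mulfK.
Qed.

End Diagonalizable.

Lemma strictly_decreasing_inj (R : rcfType) n (x : 'I_n -> R) :
  strictly_decreasing x -> injective x.
Proof.
move=> x_decr j l xjl; apply/eqP; rewrite -val_eqE /=.
by case: ltngtP => // /x_decr; rewrite xjl ltxx.
Qed.

Local Open Scope complex_scope.

Theorem mainTheorem1 (R : rcfType) (n : nat) (g : R) (q p lam : 'I_n -> R)
    (U : 'M[R[i]]_n) :
  g != 0 ->
  strictly_decreasing q ->
  strictly_decreasing lam ->
  unitary U ->
  U *m CM_L g q p *m adjoint U = diag_mx (\row_k (lam k)%:C) ->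
  forall k : 'I_n,
    CM_D g q p (lam k)%:C / ((CM_A g q p)^`()).[(lam k)%:C]
    = (U *m CM_Q q *m adjoint U) k k.
Proof.
move=> _ _ lam_decr U_unitary U_diag k.
have lamC_inj : injective (fun k => (lam k)%:C).
  by move=> j l [/(strictly_decreasing_inj lam_decr)].
exact: mxtrace_adj_sub_diagonalizable U_unitary U_diag _ _ lamC_inj.
Qed.
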